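(* Let $X$ be a real Banach space and let $A \subset X$ be a balanced, bounded, convex, closed subset. Assume there is a finite subset $O \subset X$ such that $B_X \subset A + O$. Then for every $\lambda$ with $0<\lambda < 1/2$, $A$ contains a finite-codimensional ball of radius $\lambda$, i.e. there exist $x \in A$ and a finite-codimensional linear subspace $Y \subset X$ with $x + \lambda B_Y \subset A$.
   Context: $B_X$ is the closed unit ball of $X$ and $B_Y = B_X \cap Y$. $A$ is balanced if $tA \subset A$ for all $|t| \le 1$. $A + O$ is the Minkowski sum $\{a+o: a\in A, o\in O\}$. *)

From HB Require Import structures.
From mathcomp Require Import all_boot all_order all_algebra.
From mathcomp Require Import all_classical all_reals all_analysis.
Set Implicit Arguments. Unset Strict Implicit. Unset Printing Implicit Defensive.
Import Order.TTheory GRing.Theory Num.Theory.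
Local Open Scope classical_set_scope.
Local Open Scope ring_scope.

Definition balanced_set (R : realType) (X : normedModType R) (A : set X) :=
  forall (t : R) (a : X), `|t| <= 1 -> A a -> A (t *: a).

Definition norm_bounded (R : realType) (X : normedModType R) (A : set X) :=
  exists M : R, forall a, A a -> `|a| <= M.

Definition convex_subset (R : realType) (X : normedModType R) (A : set X) :=
  forall (a b : X) (t : R), A a -> A b -> 0 <= t -> t <= 1 ->
    A (t *: a + (1 - t) *: b).

Definition unit_ball (R : realType) (X : normedModType R) : set X :=
  [set x | `|x| <= 1].

Definition minkowski_sum (R : realType) (X : normedModType R) (A O : set X)
  : set X := [set a + o | a in A & o in O].

Definition linear_subspace (R : realType) (X : normedModType R) (Y : set X) :=
  Y 0 /\ (forall y z, Y y -> Y z -> Y (y + z)) /\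
  (forall (c : R) y, Y y -> Y (c *: y)).

Definition finite_codim (R : realType) (X : normedModType R) (Y : set X) :=
  exists s : seq X, forall x : X, exists2 y, Y y &
    exists c : 'I_(size s) -> R, x = y + \sum_(i < size s) c i *: s`_i.

Definition translated_ball (R : realType) (X : normedModType R)
  (x : X) (lam : R) (Y : set X) : set X :=
  [set x + lam *: y | y in @unit_ball R X `&` Y].

From HB Require Import structures.
From mathcomp Require Import all_boot all_order all_algebra.
From mathcomp Require Import all_classical all_reals all_analysis.
From mathcomp Require Import ring lra.
Set Implicit Arguments. Unset Strict Implicit. Unset Printing Implicit Defensive.
Import Order.TTheory GRing.Theory Num.Theory.
Local Open Scope classical_set_scope.
Local Open Scope ring_scope.

(* Suppose no ball lam B_Y centred at 0, with Y of finite codimension, lies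
   in A, and let B_Y be covered by A + O' for some O' contained in O.  Pick z in
   B_Y with lam z outside A.  As A is closed, lam z has a positive distance d
   from A, and Hahn-Banach applied to the gauge of A + d B_X gives a linear
   functional f with f (lam z) >= 1 and |f| <= 1 on A; thus f z > 2 as
   lam < 1/2.  Writing z = a + o with a in A and o in O' gives f o > 1, while a
   point a' + o' of B_Y in the kernel of f has |f o'| = |f a'| <= 1.  So the
   ball of Y /\ ker f, again of finite codimension, is covered by A + (O' - o),
   and iterating exhausts O, leaving 0 uncovered.  The functional f need not be
   continuous, which is harmless since codimension is meant algebraically. *)

Section HahnBanach.
Variables (R : realType) (X : lmodType R) (p : X -> R).
Hypothesis p_subadd : forall x y, p (x + y) <= p x + p y.
Hypothesis p_posZ : forall (c : R) x, 0 < c -> p (c *: x) = c * p x.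

Lemma sublinear0 : p 0 = 0.
Proof. by have := @p_posZ 2 0; rewrite ltr0n scaler0 => /(_ isT); lra. Qed.

Lemma sublinear_geN x : - p (- x) <= p x.
Proof. by have := p_subadd x (- x); rewrite subrr sublinear0; lra. Qed.

Lemma sublinear_shift (u : R) x y : 0 < u -> p (x + u *: y) = u * p (u^-1 *: x + y).
Proof. by move=> u_gt0; rewrite -p_posZ // scalerDr scalerA mulfV ?gt_eqF // scale1r. Qed.

(* Linear functionals defined on a subspace and dominated by p, encoded by
   their graphs so that Zorn's lemma can be applied to inclusion. *)
Definition dominated_graph (G : set (X * R)) :=
  [/\ forall x y r s, G (x, r) -> G (y, s) -> G (x + y, r + s),
      forall c x r, G (x, r) -> G (c *: x, c * r) &
      forall x r, G (x, r) -> r <= p x].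

Lemma dominated_graph_fun G x r r' :
  dominated_graph G -> G (x, r) -> G (x, r') -> r = r'.
Proof.
move=> [GD GZ Gp] Gr Gr'.
have le_diff u v : G (x, u) -> G (x, v) -> u - v <= 0.
  move=> Gu Gv; rewrite -sublinear0.
  by have := Gp _ _ (GD _ _ _ _ Gu (GZ (-1) _ _ Gv)); rewrite scaleN1r subrr mulN1r.
by apply/eqP; rewrite eq_le -[r <= _]subr_le0 -[r' <= _]subr_le0 !le_diff.
Qed.

Lemma dominated_graph_bigcup (F : set (set (X * R))) :
  total_on F subset -> (forall G, F G -> dominated_graph G) ->
  dominated_graph (\bigcup_(G in F) G).
Proof.
move=> Ftot Fdom; split.
- move=> x y r s [G1 FG1 G1x] [G2 FG2 G2y].
  have [G12|G21] := Ftot _ _ FG1 FG2.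
  + by exists G2 => //; have [GD _ _] := Fdom _ FG2; apply: GD => //; apply: G12.
  + by exists G1 => //; have [GD _ _] := Fdom _ FG1; apply: GD => //; apply: G21.
- by move=> c x r [G FG Gx]; exists G => //; have [_ GZ _] := Fdom _ FG; apply: GZ.
- by move=> x r [G FG Gx]; have [_ _ Gp] := Fdom _ FG; apply: Gp.
Qed.

(* The graph of the extension of G to the span of G's domain and x0 that maps
   x0 to c. *)
Definition graph_ext (G : set (X * R)) (x0 : X) (c : R) : set (X * R) :=
  [set u | exists t, G (u.1 - t *: x0, u.2 - t * c)].

Lemma graph_ext_slope G x0 : dominated_graph G -> G (0, 0) ->
  exists c, (forall x r, G (x, r) -> r - p (x - x0) <= c) /\
            (forall x r, G (x, r) -> c <= p (x + x0) - r).
Proof.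
move=> [GD _ Gp] G00.
have sep x r y s : G (x, r) -> G (y, s) -> r - p (x - x0) <= p (y + x0) - s.
  move=> Gx Gy; have := Gp _ _ (GD _ _ _ _ Gx Gy).
  by have := p_subadd (x - x0) (y + x0); rewrite addrACA addNr addr0; lra.
pose S := [set u.2 - p (u.1 - x0) | u in G].
exists (sup S); split => [x r Gx|y s Gy].
- apply: ub_le_sup; last by exists (x, r).
  by exists (p (0 + x0) - 0) => _ [[x' r'] Gx' <-]; apply: sep Gx' G00.
- apply: ge_sup; first by exists (0 - p (0 - x0)), (0, 0).
  by move=> _ [[x r] Gx <-]; apply: sep Gx Gy.
Qed.

Section Extension.
Variables (G : set (X * R)) (x0 : X) (c : R).
Hypothesis G_dom : dominated_graph G.
Hypothesis c_ge : forall x r, G (x, r) -> r - p (x - x0) <= c.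
Hypothesis c_le : forall x r, G (x, r) -> c <= p (x + x0) - r.

Lemma graph_ext_le x r t : G (x, r) -> r + t * c <= p (x + t *: x0).
Proof.
have [_ GZ Gp] := G_dom; move=> Gx.
have [t_lt0|t_gt0|->] := ltgtP t 0; last by rewrite mul0r scale0r !addr0; apply: Gp.
- have u_gt0 : 0 < - t by rewrite oppr_gt0.
  have := c_ge (GZ (- t)^-1 _ _ Gx) => /(ler_wpM2l (ltW u_gt0)).
  rewrite mulrBr mulrA mulfV ?gt_eqF // mul1r -sublinear_shift //.
  by rewrite scalerN scaleNr opprK; lra.
- have := c_le (GZ t^-1 _ _ Gx) => /(ler_wpM2l (ltW t_gt0)).
  by rewrite mulrBr mulrA mulfV ?gt_eqF // mul1r -sublinear_shift //; lra.
Qed.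

Lemma graph_ext_dominated : dominated_graph (graph_ext G x0 c).
Proof.
have [GD GZ _] := G_dom; split.
- move=> x y r s [t /= Gx] [u /= Gy]; exists (t + u) => /=.
  suff -> : (x + y - (t + u) *: x0, r + s - (t + u) * c) =
            (x - t *: x0 + (y - u *: x0), r - t * c + (s - u * c)) by apply: GD.
  by congr pair; [rewrite scalerDl opprD addrACA | ring].
- move=> k x r [t /= Gx]; exists (k * t) => /=.
  suff -> : (k *: x - (k * t) *: x0, k * r - k * t * c) =
            (k *: (x - t *: x0), k * (r - t * c)) by apply: GZ.
  by congr pair; [rewrite scalerBr scalerA | ring].
- move=> x r [t /= Gx].
  by have := graph_ext_le t Gx; rewrite !subrK.
Qed.

End Extension.

Lemma maximal_dominated_graph_total M :
  dominated_graph M -> M (0, 0) -> (forall B, M `<` B -> ~ dominated_graph B) ->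
  forall x, exists r, M (x, r).
Proof.
move=> Mdom M00 Mmax x0; apply: contrapT => /forallNP Mx0.
have [c [c_ge c_le]] := graph_ext_slope x0 Mdom M00.
apply: (Mmax (graph_ext M x0 c)); last exact: graph_ext_dominated.
split=> [[x r] Mx|ext_sub]; first by exists 0; rewrite scale0r mul0r !subr0.
by apply: (Mx0 c); apply: ext_sub; exists 1; rewrite /= scale1r mul1r !subrr.
Qed.

Lemma dominated_graph_line z : dominated_graph [set (t *: z, t * p z) | t in [set: R]].
Proof.
split.
- move=> _ _ _ _ [t _ [<- <-]] [u _ [<- <-]].
  by exists (t + u) => //; rewrite scalerDl mulrDl.
- by move=> c _ _ [t _ [<- <-]]; exists (c * t) => //; rewrite scalerA mulrA.
- move=> _ _ [t _ [<- <-]]; have [t_lt0|t_gt0|->] := ltgtP t 0.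
  + have := sublinear_geN (t *: z).
    by rewrite -scaleNr (@p_posZ (- t)) ?oppr_gt0 // mulNr opprK.
  + by rewrite p_posZ.
  + by rewrite scale0r mul0r sublinear0.
Qed.

Theorem hahn_banach z : exists f : {scalar X}, f z = p z /\ forall x, f x <= p x.
Proof.
pose L := [set (t *: z, t * p z) | t in [set: R]].
have Ldom : dominated_graph L := dominated_graph_line z.
(* The empty graph must be allowed: it is the union of the empty chain. *)
pose P := [set G | dominated_graph G /\ (G !=set0 -> L `<=` G)].
have [M [[Mdom ML] Mmax]] : exists M, P M /\ forall B, M `<` B -> ~ P B.
  apply: Zorn_bigcup => F FP Ftot; split.
    by apply: dominated_graph_bigcup => // G /FP [].
  by move=> [u [G FG Gu]] v Lv; exists G => //; apply: (FP G FG).2 => //; exists u.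
have L0 : L (0, 0) by exists 0 => //; rewrite scale0r mul0r.
have LM : L `<=` M.
  apply: ML; apply: contrapT => /forallNP M0; apply: (Mmax L).
    by split=> [u /M0 //|/(_ _ L0) /M0].
  by split=> // _; apply: subset_refl.
have Mmax' B : M `<` B -> ~ dominated_graph B.
  by move=> MB Bdom; apply: (Mmax B MB); split=> // _; apply: subset_trans LM MB.1.
have Mtot := maximal_dominated_graph_total Mdom (LM _ L0) Mmax'.
pose f x := projT1 (cid (Mtot x)).
have Mf x : M (x, f x) := projT2 (cid (Mtot x)).
have [MD MZ Mp] := Mdom.
have f_scalar : scalar f.
  by move=> c x y; apply: (dominated_graph_fun Mdom (Mf _)); apply: MD (MZ _ _ _ (Mf x)) (Mf y).
exists (HB.pack_for {scalar X} f (GRing.isLinear.Build R X R *%R f f_scalar)).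
split=> [|x] /=; last exact: Mp.
by apply: (dominated_graph_fun Mdom (Mf z)); apply: LM; exists 1 => //; rewrite scale1r mul1r.
Qed.

End HahnBanach.

Lemma convex_conic_comb (R : realType) (X : normedModType R) (A : set X)
    (t1 t2 : R) (a1 a2 : X) :
  convex_subset A -> A 0 -> 0 <= t1 -> 0 <= t2 -> A a1 -> A a2 ->
  exists2 a, A a & t1 *: a1 + t2 *: a2 = (t1 + t2) *: a.
Proof.
move=> A_convex A0 t1_ge0 t2_ge0 Aa1 Aa2.
have := addr_ge0 t1_ge0 t2_ge0; rewrite le_eqVlt => /orP[/eqP t12_0|t12_gt0].
  have [-> ->] : t1 = 0 /\ t2 = 0 by split; lra.
  by exists 0; rewrite ?addr0 ?scale0r ?addr0.
pose s := t1 / (t1 + t2).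
have s_ge0 : 0 <= s by rewrite divr_ge0 // ltW.
have s_le1 : s <= 1 by rewrite ler_pdivrMr // mul1r lerDl.
exists (s *: a1 + (1 - s) *: a2); first exact: A_convex.
have t12_neq0 : t1 + t2 != 0 by rewrite gt_eqF.
rewrite scalerDr !scalerA; congr (_ *: _ + _ *: _); by rewrite /s; field.
Qed.

Section ThickGauge.
Variables (R : realType) (X : normedModType R) (A : set X) (d : R).
Hypotheses (A0 : A 0) (A_convex : convex_subset A) (d_gt0 : 0 < d).

(* The infimal convolution of the gauge of A with |.|/d, essentially the gauge
   of A + d B_X: unlike the gauge of A it is finite everywhere, it is still
   at most 1 on A, and it is at least 1 at distance >= d from a balanced A. *)
Definition thick_gauge (x : X) : R :=
  inf [set t + `|x - t *: a| / d | t in [set t : R | 0 <= t] & a in A].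

Lemma thick_gauge_le x t a : 0 <= t -> A a -> thick_gauge x <= t + `|x - t *: a| / d.
Proof.
move=> t_ge0 Aa; apply: ge_inf; last by exists t => //; exists a.
by exists 0 => _ [u u_ge0 [b _ <-]]; rewrite addr_ge0 // divr_ge0 // ltW.
Qed.

Lemma thick_gauge_ge x m :
  (forall t a, 0 <= t -> A a -> m <= t + `|x - t *: a| / d) -> m <= thick_gauge x.
Proof.
move=> lb; apply: lb_le_inf.
  by exists (0 + `|x - 0 *: 0| / d); exists 0; [exact: lexx | exists 0].
by move=> _ [t t_ge0 [a Aa <-]]; apply: lb.
Qed.

Lemma thick_gauge_leD x y t1 a1 t2 a2 : 0 <= t1 -> A a1 -> 0 <= t2 -> A a2 ->
  thick_gauge (x + y) <= (t1 + `|x - t1 *: a1| / d) + (t2 + `|y - t2 *: a2| / d).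
Proof.
move=> t1_ge0 Aa1 t2_ge0 Aa2.
have [a Aa comb] := convex_conic_comb A_convex A0 t1_ge0 t2_ge0 Aa1 Aa2.
have tri : `|x + y - (t1 *: a1 + t2 *: a2)| / d <= `|x - t1 *: a1| / d + `|y - t2 *: a2| / d.
  by rewrite -mulrDl ler_pM2r ?invr_gt0 // opprD addrACA ler_normD.
have := thick_gauge_le (x + y) (addr_ge0 t1_ge0 t2_ge0) Aa; rewrite -comb; lra.
Qed.

Lemma thick_gauge_subadd x y : thick_gauge (x + y) <= thick_gauge x + thick_gauge y.
Proof.
suff : thick_gauge (x + y) - thick_gauge y <= thick_gauge x by lra.
apply: thick_gauge_ge => t1 a1 t1_ge0 Aa1.
suff : thick_gauge (x + y) - (t1 + `|x - t1 *: a1| / d) <= thick_gauge y by lra.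
apply: thick_gauge_ge => t2 a2 t2_ge0 Aa2.
by have := thick_gauge_leD x y t1_ge0 Aa1 t2_ge0 Aa2; lra.
Qed.

Lemma thick_gauge_posZ c x : 0 < c -> thick_gauge (c *: x) = c * thick_gauge x.
Proof.
have leZ k y : 0 < k -> thick_gauge (k *: y) <= k * thick_gauge y.
  move=> k_gt0; rewrite mulrC -ler_pdivrMr //; apply: thick_gauge_ge => t a t_ge0 Aa.
  rewrite ler_pdivrMr //.
  apply: le_trans (thick_gauge_le _ (mulr_ge0 (ltW k_gt0) t_ge0) Aa) _.
  by rewrite -scalerA -scalerBr normrZ gtr0_norm //; lra.
move=> c_gt0; apply/eqP; rewrite eq_le leZ //=.
have := leZ c^-1 (c *: x); rewrite invr_gt0 scalerA mulVf ?gt_eqF // scale1r.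
by move=> /(_ c_gt0) /(ler_wpM2l (ltW c_gt0)); rewrite mulrA mulfV ?gt_eqF // mul1r.
Qed.

Lemma thick_gauge_le1 a : A a -> thick_gauge a <= 1.
Proof.
move=> Aa; apply: le_trans (thick_gauge_le a ler01 Aa) _.
by rewrite scale1r subrr normr0 mul0r addr0.
Qed.

Lemma thick_gauge_ge1 w : balanced_set A -> (forall a, A a -> d <= `|w - a|) ->
  1 <= thick_gauge w.
Proof.
move=> A_bal far; apply: thick_gauge_ge => t a t_ge0 Aa.
have dist_ge0 : 0 <= `|w - t *: a| / d by rewrite divr_ge0 // ltW.
have [t_le1|] := lerP t 1; last by lra.
have : d <= `|w - t *: a| by apply/far/A_bal => //; rewrite ger0_norm.
by rewrite -[d in d <= _]mul1r -ler_pdivlMr //; lra.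
Qed.

End ThickGauge.

Lemma separate_from_closed_convex_balanced (R : realType) (X : normedModType R)
    (A : set X) (w : X) :
  A 0 -> balanced_set A -> convex_subset A -> closed A -> ~ A w ->
  exists f : {scalar X}, 1 <= f w /\ forall a, A a -> `|f a| <= 1.
Proof.
move=> A0 A_bal A_convex A_closed Aw.
have [d d_gt0 far] : exists2 d : R, 0 < d & forall a, A a -> d <= `|w - a|.
  have : open (~` A) by rewrite openC.
  rewrite openE => /(_ _ Aw) /nbhs_ballP [d d_gt0 ball_notA].
  exists d => // a Aa; rewrite leNgt; apply/negP => wa_lt.
  by apply: (ball_notA a) => //; rewrite -ball_normE.
have [f [fw fq]] := hahn_banach (thick_gauge_subadd A0 A_convex d_gt0)
  (thick_gauge_posZ A0 d_gt0) w.
exists f; split; first by rewrite fw; apply: thick_gauge_ge1.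
move=> a Aa; have fa := le_trans (fq a) (thick_gauge_le1 d_gt0 Aa).
have ANa : A (- a) by rewrite -scaleN1r; apply: A_bal; rewrite ?normrN ?normr1.
have := le_trans (fq (- a)) (thick_gauge_le1 d_gt0 ANa).
by rewrite linearN ler_norml => fNa; apply/andP; split; lra.
Qed.

Section FiniteCodimension.
Variables (R : realType) (X : normedModType R).

Lemma unit_ball0 : @unit_ball R X 0.
Proof. by rewrite /unit_ball /= normr0. Qed.

Lemma linear_subspaceI (Y Z : set X) :
  linear_subspace Y -> linear_subspace Z -> linear_subspace (Y `&` Z).
Proof.
move=> [Y0 [YD YZ]] [Z0 [ZD ZZ]]; split=> //; split.
  by move=> x y [Yx Zx] [Yy Zy]; split; [apply: YD | apply: ZD].
by move=> c x [Yx Zx]; split; [apply: YZ | apply: ZZ].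
Qed.

Lemma linear_subspace_ker (f : {scalar X}) : linear_subspace [set x | f x = 0].
Proof.
split; first exact: raddf0.
split=> [x y /= fx fy|c x /= fx]; first by rewrite linearD fx fy addr0.
by rewrite scalarZ fx mulr0.
Qed.

Lemma finite_codim_ker (Z : set X) (f : {scalar X}) (z : X) :
  linear_subspace Z -> finite_codim Z -> Z z -> f z != 0 ->
  finite_codim (Z `&` [set x | f x = 0]).
Proof.
move=> [_ [ZD ZZ]] [s Zspan] Zz fz_neq0; exists (z :: s) => x.
have [y Zy [c ->]] := Zspan x.
pose k := f y / f z.
exists (y - k *: z).
  split; first by apply: ZD => //; rewrite -scaleNr; apply: ZZ.
  by rewrite /= linearB scalarZ divfK // subrr.
exists (fun i : 'I_(size s).+1 => if unlift ord0 i is Some j then c j else k).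
rewrite big_ord_recl unlift_none /= addrA subrK; congr (_ + _).
by apply: eq_bigr => i _; rewrite liftK.
Qed.

End FiniteCodimension.

Lemma minkowski_sum_ker_rem (R : realType) (X : normedModType R) (A Z : set X)
    (s : seq X) (f : {scalar X}) (o : X) :
  (forall a, A a -> `|f a| <= 1) -> 1 < f o ->
  @unit_ball R X `&` Z `<=` minkowski_sum A [set` s] ->
  @unit_ball R X `&` (Z `&` [set x | f x = 0]) `<=` minkowski_sum A [set` rem o s].
Proof.
move=> fA fo cover y [y1 [Zy fy0]]; have [a Aa [b sb aby]] := cover y (conj y1 Zy).
exists a => //; exists b => //; rewrite /= rem_mem //; apply/eqP => bo.
have := fA _ Aa; move: fy0; rewrite /= -aby bo linearD ler_norml.
by move=> fao /andP[fa _]; lra.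
Qed.

Section FinitelyCoveredBall.
Variables (R : realType) (X : normedModType R) (A : set X) (lam : R).
Hypotheses (A0 : A 0) (A_bal : balanced_set A) (A_convex : convex_subset A).
Hypotheses (A_closed : closed A) (lam_gt0 : 0 < lam) (lam_lt : lam < 1 / 2).

Lemma finitely_covered_ball (s : seq X) (Z : set X) :
  linear_subspace Z -> finite_codim Z ->
  @unit_ball R X `&` Z `<=` minkowski_sum A [set` s] ->
  exists Y, [/\ linear_subspace Y, finite_codim Y & translated_ball 0 lam Y `<=` A].
Proof.
move: {2}(size s) (leqnn (size s)) => n.
elim: n s Z => [|n IH] s Z s_le Zlin Zcodim cover.
  have [a _ [b bs _]] := cover 0 (conj (@unit_ball0 R X) Zlin.1).
  by move: s_le bs; rewrite leqn0 size_eq0 => /eqP ->.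
have [Zball|] := pselect (translated_ball 0 lam Z `<=` A); first by exists Z.
move=> /existsNP[_ /not_implyP[[z [z1 Zz] <-] notA]].
have [f [fz fA]] := separate_from_closed_convex_balanced A0 A_bal A_convex A_closed notA.
rewrite add0r scalarZ in fz.
have [a Aa [b bs azb]] := cover z (conj z1 Zz).
have fz_gt2 : 2 < f z.
  have lam2 : lam * 2 < 1 by rewrite -ltr_pdivlMr.
  rewrite ltNge; apply/negP => /(ler_wpM2l (ltW lam_gt0)); lra.
have fb : 1 < f b.
  by have := fA _ Aa; rewrite -(addrK b a) azb linearB ler_norml => /andP[_]; lra.
apply: (IH (rem b s) (Z `&` [set x | f x = 0])).
- by rewrite size_rem //; move: s_le; case: (size s).
- exact: linear_subspaceI Zlin (linear_subspace_ker f).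
- by apply: finite_codim_ker Zz _ => //; apply/eqP => fz0; move: fz; rewrite fz0 mulr0; lra.
- exact: minkowski_sum_ker_rem fA fb cover.
Qed.

End FinitelyCoveredBall.

Theorem corollary4p3 (R : realType) (X : completeNormedModType R) (A : set X) :
  balanced_set A -> norm_bounded A -> convex_subset A -> closed A ->
  (exists O : set X, finite_set O /\ @unit_ball R X `<=` minkowski_sum A O) ->
  forall lam : R, 0 < lam -> lam < 1 / 2 ->
    exists x : X, exists Y : set X,
      A x /\ linear_subspace Y /\ finite_codim Y /\ translated_ball x lam Y `<=` A.
Proof.
move=> A_bal _ A_convex A_closed [S [S_fin cover]] lam lam_gt0 lam_lt.
have [s Ss] := (finite_seqP S).1 S_fin; rewrite {S S_fin}Ss in cover.
have A0 : A 0.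
  have [a Aa _] := cover 0 (@unit_ball0 R X).
  by rewrite -(scale0r a); apply: A_bal; rewrite ?normr0.
have Tlin : linear_subspace [set: X] by [].
have Tcodim : finite_codim [set: X].
  by exists [::] => x; exists x => //; exists (fun=> 0); rewrite big_ord0 addr0.
have Tcover : @unit_ball R X `&` setT `<=` minkowski_sum A [set` s] by rewrite setIT.
have [Y [Ylin Ycodim Yball]] := finitely_covered_ball A0 A_bal A_convex A_closed
  lam_gt0 lam_lt Tlin Tcodim Tcover.
by exists 0, Y.
Qed.
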